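(* Let $G$, $\mathrm{b}$, $(w_{ij})$, $M^*$ and $(y^*,\lambda^* )$ be as in the context, and assume the LP relaxation (Primal LP) has no fractional solution. Then for any alternating path $P$ (with respect to $M^*$) in $G$ of length at least $2n$, there exists an edge $\{i,j\}\in P$ such that $|w_{ij}-y_i^*-y_j^*|>0$.
   Context: Let $G=(V,E)$ be a finite undirected simple graph, $V=\{1,\dots,n\}$, with real edge weights $w_{ij}$ and positive integers $b_i\le\deg_G(i)$; $N(i)$ is the neighbour set of $i$. A perfect $\mathrm{b}$-matching is a set of edges in which each vertex $i$ has degree exactly $b_i$; assume one exists. Primal LP: minimize $\sum_{\{i,j\}\in E}w_{ij}x_{ij}$ s.t. $\sum_{j\in N(i)}x_{ij}=b_i$ for all $i$, $0\le x_{ij}\le1$. Dual LP: maximize $\sum_ib_iy_i-\sum_{\{i,j\}\in E}\lambda_{ij}$ s.t. $w_{ij}+\lambda_{ij}\ge y_i+y_j$, $\lambda_{ij}\ge0$. ''No fractional solution'' means every optimal primal solution lies in $\{0,1\}^E$; then the minimum weight perfect $\mathrm{b}$-matching $M^*$ is unique. $(y^*,\lambda^* )$ is an optimal solution of the Dual LP. A walk $P=(i_1,i_2,\dots,i_k)$ in $G$ (consecutive vertices adjacent, length $k-1$) is an alternating path if (a) either all odd edges $\{i_1,i_2\},\{i_3,i_4\},\dots$ belong to $M^*$ and all even edges $\{i_2,i_3\},\{i_4,i_5\},\dots$ do not, or all odd edges do not belong to $M^*$ and all even edges do; and (b) $P$ may revisit vertices and edges but never repeats an edge immediately: $i_r\neq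 i_{r+1}$ and $i_r\neq i_{r+2}$ for $1\le r\le k-2$. *)

From mathcomp Require Import all_boot all_order all_algebra.
Set Implicit Arguments. Unset Strict Implicit. Unset Printing Implicit Defensive.
Import Order.TTheory GRing.Theory Num.Theory.
Local Open Scope ring_scope.

(* An edge {i,j} is represented by an ordered pair (i,j) with
   i < j; edge-indexed quantities (w, x, lambda) are functions of two vertices
   that are required to be symmetric (their values off edges are irrelevant). *)

Definition simple_graph n (e : rel 'I_n) : Prop :=
  (forall i, ~~ e i i) /\ (forall i j, e i j = e j i).

Definition sym_fun n (R : Type) (f : 'I_n -> 'I_n -> R) : Prop :=
  forall i j, f i j = f j i.

Definition edge_sum (R : realFieldType) n (e : rel 'I_n) (F : 'I_n -> 'I_n -> R) : R :=
  \sum_(i < n) \sum_(j < n | e i j && (i < j)%N) F i j.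

Definition primal_feasible (R : realFieldType) n (e : rel 'I_n) (b : 'I_n -> nat)
    (x : 'I_n -> 'I_n -> R) : Prop :=
  sym_fun x /\
  (forall i j, e i j -> 0 <= x i j <= 1) /\
  (forall i, \sum_(j < n | e i j) x i j = (b i)%:R).

Definition primal_obj (R : realFieldType) n (e : rel 'I_n) (w x : 'I_n -> 'I_n -> R) : R :=
  edge_sum e (fun i j => w i j * x i j).

Definition primal_optimal (R : realFieldType) n (e : rel 'I_n) (b : 'I_n -> nat)
    (w x : 'I_n -> 'I_n -> R) : Prop :=
  primal_feasible e b x /\
  forall x', primal_feasible e b x' -> primal_obj e w x <= primal_obj e w x'.

Definition no_fractional_solution (R : realFieldType) n (e : rel 'I_n) (b : 'I_n -> nat)
    (w : 'I_n -> 'I_n -> R) : Prop :=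
  forall x, primal_optimal e b w x -> forall i j, e i j -> x i j = 0 \/ x i j = 1.

Definition dual_feasible (R : realFieldType) n (e : rel 'I_n)
    (w : 'I_n -> 'I_n -> R) (y : 'I_n -> R) (lam : 'I_n -> 'I_n -> R) : Prop :=
  sym_fun lam /\
  (forall i j, e i j -> y i + y j <= w i j + lam i j) /\
  (forall i j, e i j -> 0 <= lam i j).

Definition dual_obj (R : realFieldType) n (e : rel 'I_n) (b : 'I_n -> nat)
    (y : 'I_n -> R) (lam : 'I_n -> 'I_n -> R) : R :=
  \sum_(i < n) (b i)%:R * y i - edge_sum e lam.

Definition dual_optimal (R : realFieldType) n (e : rel 'I_n) (b : 'I_n -> nat)
    (w : 'I_n -> 'I_n -> R) (y : 'I_n -> R) (lam : 'I_n -> 'I_n -> R) : Prop :=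
  dual_feasible e w y lam /\
  forall y' lam', dual_feasible e w y' lam' -> dual_obj e b y' lam' <= dual_obj e b y lam.

Definition perfect_bmatching n (e : rel 'I_n) (b : 'I_n -> nat) (M : rel 'I_n) : Prop :=
  (forall i j, M i j = M j i) /\
  (forall i j, M i j -> e i j) /\
  (forall i, #|[set j | M i j]| = b i).

Definition matching_weight (R : realFieldType) n (e : rel 'I_n)
    (w : 'I_n -> 'I_n -> R) (M : rel 'I_n) : R :=
  edge_sum e (fun i j => if M i j then w i j else 0).

Definition min_perfect_bmatching (R : realFieldType) n (e : rel 'I_n) (b : 'I_n -> nat)
    (w : 'I_n -> 'I_n -> R) (M : rel 'I_n) : Prop :=
  perfect_bmatching e b M /\
  forall M', perfect_bmatching e b M' -> matching_weight e w M <= matching_weight e w M'.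

(* A walk (p 0, p 1, ..., p L) of length L is an alternating path w.r.t. M:
   consecutive vertices adjacent; edges alternate in/out of M (edge number r,
   0-based, is in M iff odd r (+) c for a fixed bit c); and no immediate
   repetition: p r <> p (r+1), p r <> p (r+2). *)
Definition alternating_path n (e : rel 'I_n) (M : rel 'I_n) (p : nat -> 'I_n) (L : nat) : Prop :=
  (forall r, (r < L)%N -> e (p r) (p r.+1)) /\
  (exists c : bool, forall r, (r < L)%N -> M (p r) (p r.+1) = (odd r (+) c)) /\
  (forall r, (r < L)%N -> p r != p r.+1) /\
  (forall r, (r.+1 < L)%N -> p r != p r.+2).

From mathcomp Require Import all_boot all_order all_algebra.
From Stdlib Require Import Classical ClassicalEpsilon.
From mathcomp Require Import lra zify.
Import Order.TTheory GRing.Theory Num.Theory.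
Local Open Scope ring_scope.

(* If every edge of the walk were tight, then, since the walk has at least 2n
   edges, two of its positions k1 < k2 would carry the same vertex and the same
   parity, giving a closed alternating walk of even length made of tight edges.
   Adding +1 to its non-matching edges and -1 to its matching edges is a
   circulation, whose cost telescopes to 0 because w_ij = y_i + y_j on it.
   Shifting M* by a small multiple of it gives another LP optimum (M* is one,
   since the LP attains its optimum and every optimum is integral) which is
   fractional on the first walk edge: a contradiction. *)

Section PrimalLP.
Context {R : realFieldType} {n : nat} (e : rel 'I_n) (b : 'I_n -> nat).
Implicit Types (w x d : 'I_n -> 'I_n -> R).

Definition fractional (v : R) := (0 < v) && (v < 1).

Definition basic_solution x :=
  forall d, sym_fun d ->
    (forall i j, e i j -> ~~ fractional (x i j) -> d i j = 0) ->
    (forall i, \sum_(j < n | e i j) d i j = 0) ->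
    forall i j, e i j -> d i j = 0.

Definition num_fractional x :=
  #|[set ij : 'I_n * 'I_n | e ij.1 ij.2 && fractional (x ij.1 ij.2)]|.

Lemma edge_sum_linear (F G : 'I_n -> 'I_n -> R) (t : R) :
  edge_sum e (fun i j => F i j + t * G i j) = edge_sum e F + t * edge_sum e G.
Proof.
rewrite /edge_sum mulr_sumr -big_split; apply: eq_bigr => i _ /=.
by rewrite mulr_sumr -big_split.
Qed.

Lemma primal_obj_shift w x d (t : R) :
  primal_obj e w (fun i j => x i j + t * d i j) =
  primal_obj e w x + t * edge_sum e (fun i j => w i j * d i j).
Proof.
rewrite /primal_obj -edge_sum_linear; apply: eq_bigr => i _; apply: eq_bigr => j _.
by rewrite mulrDr mulrCA.
Qed.

Lemma primal_obj_eq_on_edges w {x x'} :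
  (forall i j, e i j -> x i j = x' i j) -> primal_obj e w x = primal_obj e w x'.
Proof.
by move=> xx'; apply: eq_bigr => i _; apply: eq_bigr => j /andP[eij _]; rewrite xx'.
Qed.

Definition max_step (v dv : R) := if 0 < dv then (1 - v) / dv else - (v / dv).

Lemma max_stepP {v dv : R} : fractional v -> dv != 0 ->
  [/\ 0 < max_step v dv, ~~ fractional (v + max_step v dv * dv)
    & forall t, 0 <= t <= max_step v dv -> 0 <= v + t * dv <= 1].
Proof.
move=> /andP[v0 v1] dv0; rewrite /max_step /fractional; case: ifP => dvp.
  have : (1 - v) / dv * dv = 1 - v by rewrite mulfVK.
  move: ((1 - v) / dv) => s sd; split; first nra.
    by rewrite sd subrKC ltxx andbF.
  by move=> t /andP[t0 ts]; apply/andP; split; nra.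
have dvn : dv < 0 by rewrite lt_neqAle dv0 leNgt dvp.
have : - (v / dv) * dv = - v by rewrite mulNr mulfVK.
move: (- (v / dv)) => s sd; split; first nra.
  by rewrite sd subrr ltxx.
by move=> t /andP[t0 ts]; apply/andP; split; nra.
Qed.

(* Ratio test: move along [d] until the first fractional edge becomes integral. *)
Lemma improve_along {w x d} {i0 j0 : 'I_n} :
  primal_feasible e b x -> sym_fun d ->
  (forall i j, e i j -> ~~ fractional (x i j) -> d i j = 0) ->
  (forall i, \sum_(j < n | e i j) d i j = 0) ->
  e i0 j0 -> d i0 j0 != 0 ->
  edge_sum e (fun i j => w i j * d i j) <= 0 ->
  exists x', [/\ primal_feasible e b x', primal_obj e w x' <= primal_obj e w x
    & (num_fractional x' < num_fractional x)%N].
Proof.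
move=> [xs [xb xsum]] ds dsupp dsum e0 d0 cost.
have fracP i j : e i j -> d i j != 0 -> fractional (x i j).
  by move=> eij; apply: contraR => /(dsupp i j eij) ->.
pose P ij := e ij.1 ij.2 && (d ij.1 ij.2 != 0).
pose step ij := max_step (x ij.1 ij.2) (d ij.1 ij.2).
have P0 : P (i0, j0) by rewrite /P e0 d0.
have [[a1 a2] /andP[/= ea da] amin] := arg_minP step P0.
have [tpos ta _] := max_stepP (fracP _ _ ea da) da.
pose x' i j := x i j + step (a1, a2) * d i j.
exists x'; split.
- split; [|split].
  + by move=> i j; rewrite /x' xs ds.
  + move=> i j eij; rewrite /x'; case: (eqVneq (d i j) 0) => [->|dn].
      by rewrite mulr0 addr0 xb.
    have [_ _ bounded] := max_stepP (fracP _ _ eij dn) dn.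
    by apply: bounded; rewrite ltW //= (amin (i, j)) // /P eij dn.
  + by move=> i; rewrite /x' big_split /= -mulr_sumr dsum mulr0 addr0 xsum.
- by rewrite primal_obj_shift gerDl mulr_ge0_le0 // ltW.
set S := [set ij : 'I_n * 'I_n | e ij.1 ij.2 && fractional (x ij.1 ij.2)].
have aS : (a1, a2) \in S by rewrite inE /= ea fracP.
rewrite /num_fractional -/S (cardsD1 (a1, a2) S) aS ltnS subset_leq_card //.
apply/subsetP => -[i j]; rewrite !inE /= => /andP[eij fr].
rewrite eij /=; case: (eqVneq (d i j) 0) => [dz|dn]; last first.
  rewrite fracP // andbT; apply: contraTneq fr => -[-> ->]; exact: ta.
move: fr; rewrite /x' dz mulr0 addr0 => ->; rewrite andbT.
by apply: contraTneq da => -[<- <-]; rewrite dz eqxx.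
Qed.

Lemma improve_nonbasic w {x} : primal_feasible e b x -> ~ basic_solution x ->
  exists x', [/\ primal_feasible e b x', primal_obj e w x' <= primal_obj e w x
    & (num_fractional x' < num_fractional x)%N].
Proof.
move=> fx nbx.
have [d [ds dsupp dsum [i0 [j0 [e0 d0]]]]] : exists d, [/\ sym_fun d,
    forall i j, e i j -> ~~ fractional (x i j) -> d i j = 0,
    forall i, \sum_(j < n | e i j) d i j = 0 & exists i j, e i j /\ d i j != 0].
  apply: NNPP => none; apply: nbx => d ds dsupp dsum i j eij.
  apply/eqP/contraT => d0; case: none.
  by exists d; split => //; exists i, j.
have [cost|cost] := lerP (edge_sum e (fun i j => w i j * d i j)) 0.
  exact: improve_along fx ds dsupp dsum e0 d0 cost.
apply: (improve_along (d := fun i j => - d i j) fx _ _ _ e0).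
- by move=> i j; rewrite ds.
- by move=> i j eij /(dsupp i j eij) ->; rewrite oppr0.
- by move=> i; rewrite sumrN dsum oppr0.
- by rewrite oppr_eq0.
- suff -> : edge_sum e (fun i j => w i j * - d i j) =
              - edge_sum e (fun i j => w i j * d i j) by rewrite oppr_le0 ltW.
  rewrite /edge_sum -sumrN; apply: eq_bigr => i _; rewrite -sumrN.
  by apply: eq_bigr => j _; rewrite mulrN.
Qed.

Lemma basic_improvement w {x} : primal_feasible e b x ->
  exists xb, [/\ primal_feasible e b xb, basic_solution xb
    & primal_obj e w xb <= primal_obj e w x].
Proof.
have [k] := ubnP (num_fractional x); elim: k x => // k IH x; rewrite ltnS => xk fx.
have [bx|nbx] := classic (basic_solution x); first by exists x.
have [x' [fx' le lt]] := improve_nonbasic w fx nbx.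
have [xb [fxb bxb le']] := IH x' (leq_trans lt xk) fx'.
by exists xb; split => //; apply: le_trans le' le.
Qed.

Definition integrality_pattern x : {ffun 'I_n * 'I_n -> option bool} :=
  [ffun ij => if x ij.1 ij.2 == 0 then Some false
              else if x ij.1 ij.2 == 1 then Some true else None].

Lemma basic_solution_unique {x x'} :
  primal_feasible e b x -> primal_feasible e b x' -> basic_solution x ->
  integrality_pattern x = integrality_pattern x' ->
  forall i j, e i j -> x i j = x' i j.
Proof.
move=> [xs [xb xsum]] [xs' [_ xsum']] bx same i j eij.
apply/eqP; rewrite -subr_eq0; apply/eqP.
apply: (bx (fun i j => x i j - x' i j)) => // [i' j'|i' j' eij' nfrac|i'].
- by rewrite xs xs'.
- have x01 : x i' j' = 0 \/ x i' j' = 1.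
    move: nfrac (xb _ _ eij'); rewrite /fractional negb_and -!leNgt.
    by case/orP => ? /andP[? ?]; [left | right]; apply/le_anti/andP.
  have := congr1 (fun f : {ffun _ -> option bool} => f (i', j')) same; rewrite !ffunE /=.
  case: x01 => ->; rewrite ?eqxx ?oner_eq0;
    by case: eqP => [->|_]; [|case: eqP => [->|_]]; rewrite ?subrr.
- by rewrite sumrB xsum xsum' subrr.
Qed.

(* Basic solutions are determined by their integrality pattern, of which there
   are finitely many; the cheapest basic solution is therefore optimal. *)
Lemma primal_optimal_exists w :
  (exists x0, primal_feasible e b x0) -> exists x, primal_optimal e b w x.
Proof.
move=> [x0 fx0].
pose realised s x := [/\ primal_feasible e b x, basic_solution x
                         & integrality_pattern x = s].
pose Q s x := primal_feasible e b x /\ ((exists y, realised s y) -> realised s x).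
have inh : inhabited ('I_n -> 'I_n -> R) by constructor.
pose pick s := epsilon inh (Q s).
have pickQ s : Q s (pick s).
  apply: epsilon_spec; have [[y ry]|none] := classic (exists y, realised s y).
    by exists y; split => //; case: ry.
  by exists x0; split => // /none.
have [a _ amin] := arg_minP (fun s => primal_obj e w (pick s))
                    (isT : predT (integrality_pattern x0)).
exists (pick a); split; first by case: (pickQ a).
move=> x fx; have [xb [fxb bxb le]] := basic_improvement w fx.
have [_ /(_ (ex_intro _ xb (And3 fxb bxb erefl)))[fp bp pp]] :=
  pickQ (integrality_pattern xb).
apply: le_trans (amin (integrality_pattern xb) isT) _.
by rewrite /= (primal_obj_eq_on_edges w (basic_solution_unique fp fxb bp pp)).
Qed.

End PrimalLP.

Section MatchingLP.
Context {R : realFieldType} {n : nat} {e : rel 'I_n} {b : 'I_n -> nat}.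

Definition matching_vector (M : rel 'I_n) : 'I_n -> 'I_n -> R :=
  fun i j => (M i j)%:R.

Lemma sum_indicator_card (P Q : pred 'I_n) :
  \sum_(j < n | P j) ((Q j)%:R : R) = #|[set j | P j && Q j]|%:R.
Proof.
rewrite -natr_sum; congr (_%:R).
rewrite (eq_bigr (fun j => if Q j then 1 else 0)%N) => [|j _]; last by case: (Q j).
by rewrite -big_mkcondr sum1dep_card cardsE.
Qed.

Lemma matching_feasible {M} :
  perfect_bmatching e b M -> primal_feasible e b (matching_vector M).
Proof.
move=> [Ms [Me Mdeg]]; split; [|split] => [i j|i j _|i].
- by rewrite /matching_vector Ms.
- by rewrite /matching_vector; case: (M i j); rewrite ?ler01 ?lexx.
- rewrite sum_indicator_card -Mdeg; congr (_%:R); apply: eq_card => j.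
  by rewrite !inE andb_idl // => /Me.
Qed.

Lemma matching_obj w M : primal_obj e w (matching_vector M) = matching_weight e w M.
Proof.
apply: eq_bigr => i _; apply: eq_bigr => j _.
by rewrite /matching_vector; case: (M i j); rewrite ?mulr1 ?mulr0.
Qed.

(* An integral LP optimum is a perfect b-matching, so M* is no heavier. *)
Lemma min_bmatching_primal_optimal {w Mstar} :
  (forall i j, e i j = e j i) ->
  no_fractional_solution e b w -> min_perfect_bmatching e b w Mstar ->
  primal_optimal e b w (matching_vector Mstar).
Proof.
move=> esym nofrac [pMstar minMstar].
have [x [fx xopt]] := primal_optimal_exists e b w (ex_intro _ _ (matching_feasible pMstar)).
have x01 := nofrac x (conj fx xopt); have [xs [_ xsum]] := fx.
have on_edges i j : e i j -> x i j = ((x i j == 1)%:R : R).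
  by move=> eij; case: (x01 i j eij) => ->; rewrite ?eqxx // eq_sym oner_eq0.
pose Mx i j := e i j && (x i j == 1).
have pMx : perfect_bmatching e b Mx.
  split; [|split] => [i j|i j /andP[]//|i].
  - by rewrite /Mx esym xs.
  - apply/eqP; rewrite -(eqr_nat R) -xsum -sum_indicator_card.
    by apply/eqP/eq_bigr => j eij; rewrite -on_edges.
have wMx : matching_weight e w Mx = primal_obj e w x.
  rewrite -matching_obj; apply: primal_obj_eq_on_edges => i j eij.
  by rewrite /matching_vector /Mx eij -on_edges.
split; first exact: matching_feasible.
by move=> x' fx'; rewrite matching_obj (le_trans (minMstar _ pMx)) // wMx xopt.
Qed.

End MatchingLP.

Section EdgeIndicator.
Context {R : realFieldType} {n : nat} (e : rel 'I_n).
Hypothesis esym : forall i j, e i j = e j i.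

Definition edge_indicator (u v i j : 'I_n) : R :=
  (if (u == i) && (v == j) then 1 else 0) + (if (v == i) && (u == j) then 1 else 0).

Lemma edge_indicatorC u v i j : edge_indicator u v j i = edge_indicator u v i j.
Proof. by rewrite /edge_indicator addrC andbC [(u == j) && _]andbC. Qed.

Lemma edge_indicator_bounds {u v} i j : u != v -> 0 <= edge_indicator u v i j <= 1.
Proof.
move=> uv; rewrite /edge_indicator.
case: ifP => [/andP[/eqP <- _]|_]; case: ifP => [/andP[/eqP vu _]|_];
  rewrite ?addr0 ?add0r ?ler01 ?lexx //.
by rewrite vu eqxx in uv.
Qed.

Lemma row_sum_edge_indicator u v i : e u v ->
  \sum_(j < n | e i j) edge_indicator u v i j =
  (if u == i then 1 else 0) + (if v == i then 1 else 0).
Proof.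
move=> euv; rewrite big_split /=; congr (_ + _).
- case: (u =P i) => [<-|_] /=; last by rewrite big1.
  rewrite (bigD1 v) //= eqxx big1 ?addr0 // => j /andP[_ /negbTE jv].
  by rewrite eq_sym jv.
- case: (v =P i) => [<-|_] /=; last by rewrite big1.
  have evu : e v u by rewrite esym.
  rewrite (bigD1 u) //= eqxx big1 ?addr0 // => j /andP[_ /negbTE ju].
  by rewrite eq_sym ju.
Qed.

Lemma edge_sum_combination (w : 'I_n -> 'I_n -> R) (a : nat -> R)
    (F : nat -> 'I_n -> 'I_n -> R) (r s : nat) :
  edge_sum e (fun i j => w i j * \sum_(r <= k < s) a k * F k i j) =
  \sum_(r <= k < s) a k * edge_sum e (fun i j => w i j * F k i j).
Proof.
transitivity (\sum_(i < n) \sum_(r <= k < s)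
    \sum_(j < n | e i j && (i < j)%N) a k * (w i j * F k i j)).
  apply: eq_bigr => i _; rewrite exchange_big; apply: eq_bigr => j _.
  by rewrite mulr_sumr; apply: eq_bigr => k _; rewrite mulrCA.
rewrite exchange_big; apply: eq_bigr => k _; rewrite /edge_sum mulr_sumr.
by apply: eq_bigr => i _; rewrite mulr_sumr.
Qed.

Lemma edge_sum_edge_indicator (w : 'I_n -> 'I_n -> R) u v :
  sym_fun w -> e u v -> u != v -> edge_sum e (fun i j => w i j * edge_indicator u v i j) = w u v.
Proof.
move=> wsym euv uv.
have one_way x y : edge_sum e (fun i j => w i j * (if (x == i) && (y == j) then 1 else 0)) =
    if e x y && (x < y)%N then w x y else 0.
  rewrite /edge_sum (bigD1 x) //= [X in _ + X]big1 ?addr0 => [|i /negbTE xi]; last first.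
    by apply: big1 => j _; rewrite eq_sym xi mulr0.
  rewrite eqxx /=; case: ifP => exy.
    rewrite (bigD1 y) //= eqxx mulr1 big1 ?addr0 // => j /andP[_ /negbTE jy].
    by rewrite eq_sym jy mulr0.
  apply: big1 => j exj; case: (y =P j) => [yj|_]; last by rewrite mulr0.
  by rewrite yj exj in exy.
transitivity (edge_sum e (fun i j =>
    w i j * (if (u == i) && (v == j) then 1 else 0) +
    1 * (w i j * (if (v == i) && (u == j) then 1 else 0)))).
  by apply: eq_bigr => i _; apply: eq_bigr => j _; rewrite mul1r mulrDr.
rewrite edge_sum_linear mul1r !one_way (esym v u) euv (wsym v u) /=.
have : val u != val v by [].
by case: ltngtP; rewrite ?addr0 ?add0r.
Qed.

End EdgeIndicator.

Lemma shifted_indicator_bounds {R : realFieldType} {S m : R} (beta : bool) :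
  0 < S -> 0 <= m <= S ->
  let v := beta%:R + (2 * S)^-1 * ((if beta then -1 else 1) * m) in
  0 <= v <= 1 /\ (0 < m -> fractional v).
Proof.
move=> S0 /andP[m0 mS] /=; rewrite mulrCA /fractional.
have : (2 * S)^-1 * m * (2 * S) = m.
  by rewrite mulrAC mulVf ?mul1r // mulf_neq0 // gt_eqF.
move: ((2 * S)^-1 * m) => t tm.
by case: beta => /=; split => [|mpos]; apply/andP; split; nra.
Qed.

Section TightClosedWalk.
Context {R : realFieldType} {n : nat} {e : rel 'I_n}.
Hypothesis esym : forall i j, e i j = e j i.
Context {p : nat -> 'I_n} {c : bool} {r s : nat}.
Hypothesis walk_edge : forall k, (k < s)%N -> e (p k) (p k.+1).
Hypothesis walk_step : forall k, (k < s)%N -> p k != p k.+1.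
Hypotheses (lt_rs : (r < s)%N) (closed : p r = p s) (even_length : odd r = odd s).

Definition alt_sign (k : nat) : R := if odd k (+) c then -1 else 1.

Definition walk_flow (i j : 'I_n) : R :=
  \sum_(r <= k < s) alt_sign k * edge_indicator (p k) (p k.+1) i j.

Definition walk_count (i j : 'I_n) : R :=
  \sum_(r <= k < s) edge_indicator (p k) (p k.+1) i j.

(* Consecutive edges carry opposite signs, so these sums telescope around the closed walk. *)
Lemma alt_sum_closed (a : nat -> R) : a r = a s ->
  \sum_(r <= k < s) alt_sign k * (a k + a k.+1) = 0.
Proof.
move=> ars; rewrite (telescope_sumr_eq (fun k => alt_sign k.+1 * a k)) ?(ltnW lt_rs) //.
  by rewrite /alt_sign /= even_length ars subrr.
by move=> k _; rewrite /alt_sign /= negbK addNb; case: (odd k (+) c) => /=; lra.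
Qed.

Lemma walk_flow_row_sum i : \sum_(j < n | e i j) walk_flow i j = 0.
Proof.
rewrite exchange_big /= -[RHS](alt_sum_closed (fun k => if p k == i then 1 else 0)).
  apply: eq_big_nat => k /andP[_ ks].
  by rewrite -mulr_sumr row_sum_edge_indicator // walk_edge.
by rewrite /= closed.
Qed.

Lemma walk_flow_cost {w : 'I_n -> 'I_n -> R} {y : 'I_n -> R} : sym_fun w ->
  (forall k, (k < s)%N -> w (p k) (p k.+1) = y (p k) + y (p k.+1)) ->
  edge_sum e (fun i j => w i j * walk_flow i j) = 0.
Proof.
move=> wsym tight; rewrite edge_sum_combination -[RHS](alt_sum_closed (y \o p)).
  apply: eq_big_nat => k /andP[_ ks].
  by rewrite edge_sum_edge_indicator ?walk_edge ?walk_step ?tight.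
by rewrite /= closed.
Qed.

Lemma walk_flow_signed {M : rel 'I_n} : (forall i j, M i j = M j i) ->
  (forall k, (k < s)%N -> M (p k) (p k.+1) = odd k (+) c) ->
  forall i j, walk_flow i j = (if M i j then -1 else 1) * walk_count i j.
Proof.
move=> Msym alt i j; rewrite /walk_count mulr_sumr; apply: eq_big_nat => k /andP[_ ks].
rewrite /alt_sign /edge_indicator -alt //.
case E1: ((p k == i) && (p k.+1 == j)).
  by case/andP: E1 => /eqP <- /eqP <-.
case E2: ((p k.+1 == i) && (p k == j)); last by rewrite addr0 !mulr0.
by case/andP: E2 => /eqP <- /eqP <-; rewrite Msym.
Qed.

Lemma walk_edge_indicator_bounds {k} i j :
  (k < s)%N -> 0 <= edge_indicator (R := R) (p k) (p k.+1) i j <= 1.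
Proof. by move=> ks; apply: edge_indicator_bounds; apply: walk_step. Qed.

Lemma walk_count_bounds i j : 0 <= walk_count i j <= (s - r)%:R.
Proof.
rewrite /walk_count -sumr_const_nat; apply/andP; split.
  rewrite big_nat_cond sumr_ge0 // => k /andP[/andP[_ ks] _].
  by case/andP: (walk_edge_indicator_bounds i j ks).
apply: ler_sum_nat => k /andP[_ ks].
by case/andP: (walk_edge_indicator_bounds i j ks).
Qed.

Lemma walk_count_first : 1 <= walk_count (p r) (p r.+1).
Proof.
rewrite /walk_count big_ltn // {1}/edge_indicator !eqxx /= -addrA lerDl addr_ge0 //.
  by case: ifP; rewrite ?ler01.
rewrite big_nat_cond sumr_ge0 // => k /andP[/andP[_ ks] _].
by case/andP: (walk_edge_indicator_bounds (p r) (p r.+1) ks).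
Qed.

(* Shifting all walk edges by [+/- 1/(2(s - r))] keeps the matching LP
   optimal but makes the first walk edge fractional. *)
Lemma tight_alternating_closed_walk_contra {b : 'I_n -> nat} {w : 'I_n -> 'I_n -> R}
    {M : rel 'I_n} {y : 'I_n -> R} :
  sym_fun w -> (forall i j, M i j = M j i) ->
  no_fractional_solution e b w -> primal_optimal e b w (matching_vector M) ->
  (forall k, (k < s)%N -> M (p k) (p k.+1) = odd k (+) c) ->
  (forall k, (k < s)%N -> w (p k) (p k.+1) = y (p k) + y (p k.+1)) -> False.
Proof.
move=> wsym Msym nofrac [fM Mopt] alt tight.
have len_gt0 : 0 < (s - r)%:R :> R by rewrite ltr0n subn_gt0.
pose x i j := matching_vector M i j + (2 * (s - r)%:R)^-1 * walk_flow i j.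
have shifted i j := shifted_indicator_bounds (M i j) len_gt0 (walk_count_bounds i j).
have fx : primal_feasible e b x.
  have [_ [_ Msum]] := fM.
  split; [|split] => [i j|i j _|i].
  - rewrite /x /matching_vector Msym; congr (_ + _ * _).
    by apply: eq_bigr => k _; rewrite edge_indicatorC.
  - by rewrite /x (walk_flow_signed Msym alt); case: (shifted i j).
  - by rewrite /x big_split /= -mulr_sumr walk_flow_row_sum mulr0 addr0 Msum.
have xopt : primal_optimal e b w x.
  by split=> // x' fx'; rewrite primal_obj_shift (walk_flow_cost wsym tight) mulr0 addr0 Mopt.
have [_ frac] := shifted (p r) (p r.+1).
have := nofrac x xopt (p r) (p r.+1) (walk_edge r lt_rs).
rewrite /x (walk_flow_signed Msym alt).
move: (frac (lt_le_trans ltr01 walk_count_first)).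
by case/andP => lo hi [eq0|eq1]; [rewrite eq0 ltxx in lo | rewrite eq1 ltxx in hi].
Qed.

End TightClosedWalk.

Lemma walk_revisits_with_parity {n : nat} (p : nat -> 'I_n) :
  exists k1 k2, [/\ (k1 < k2 <= 2 * n)%N, p k1 = p k2 & odd k1 = odd k2].
Proof.
pose f (k : 'I_(2 * n).+1) := (p k, odd k).
have /injectivePn[k1 [k2 k12 [pk ok]]] : ~~ injectiveb f.
  by apply/injectiveP => /leq_card; rewrite card_prod card_bool !card_ord; lia.
have [lt|gt|eq] := ltngtP k1 k2.
- by exists k1, k2; rewrite lt -ltnS ltn_ord.
- by exists k2, k1; rewrite gt -ltnS ltn_ord.
- by move/val_inj: eq k12 => ->; rewrite eqxx.
Qed.

Theorem lemma2 (R : realFieldType) (n : nat) (e : rel 'I_n)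
  (w : 'I_n -> 'I_n -> R) (b : 'I_n -> nat) (Mstar : rel 'I_n)
  (ystar : 'I_n -> R) (lamstar : 'I_n -> 'I_n -> R) :
  simple_graph e ->
  sym_fun w ->
  (forall i, (0 < b i)%N /\ (b i <= #|[set j | e i j]|)%N) ->
  (exists M, perfect_bmatching e b M) ->
  no_fractional_solution e b w ->
  min_perfect_bmatching e b w Mstar ->
  dual_optimal e b w ystar lamstar ->
  forall (p : nat -> 'I_n) (L : nat),
    alternating_path e Mstar p L ->
    (2 * n <= L)%N ->
    exists r, (r < L)%N /\
      0 < `| w (p r) (p r.+1) - ystar (p r) - ystar (p r.+1) |.
Proof.
move=> [_ esym] wsym _ _ nofrac minM _ p L [walk [[c alt] [step _]]] long.
apply: NNPP => all_tight.
have tight k : (k < L)%N -> w (p k) (p k.+1) = ystar (p k) + ystar (p k.+1).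
  move=> kL; apply/eqP; rewrite -subr_eq0 opprD addrA -normr_eq0 eq_le normr_ge0 andbT.
  by rewrite leNgt; apply/negP => slack; apply: all_tight; exists k.
have Mopt := min_bmatching_primal_optimal esym nofrac minM.
have [k1 [k2 [/andP[k12 k2n] pk ok]]] := walk_revisits_with_parity p.
have below k : (k < k2)%N -> (k < L)%N by move=> kk; apply: leq_trans kk (leq_trans k2n long).
apply: (tight_alternating_closed_walk_contra esym
          (fun k kk => walk k (below k kk)) (fun k kk => step k (below k kk))
          k12 pk ok wsym (proj1 (proj1 minM)) nofrac Mopt
          (fun k kk => alt k (below k kk)) (fun k kk => tight k (below k kk))).
Qed.
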